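(* Let $H$ be a complex separable Hilbert space and let $\mathcal{G}$ be a countably infinite abelian group of unitary operators on $H$. Let $X = \{x_1,\dots,x_r\}$ and $Y = \{y_1,\dots,y_s\}$ be finite subsets of $H$ with $r < s$, let $V_0 = \overline{\mathrm{span}}\, \mathcal{G}(X)$ and $V_1 = \overline{\mathrm{span}}\, \mathcal{G}(Y)$, and assume $V_0 \subset V_1$. Let $W_0$ be a closed linear subspace of $V_1$ such that $V_0 + W_0 = V_1$ and $V_0 \cap W_0 = \{0\}$. Suppose that $\mathcal{G}(X)$ and $\mathcal{G}(Y)$ are frames for $V_0$ and $V_1$ respectively. Then there exists a finite subset $\Gamma = \{z_1,\dots,z_p\}$ of $W_0$ (for some positive integer $p$, not necessarily equal to $s-r$) such that $\mathcal{G}(\Gamma)$ is a frame for $W_0$ if and only if $g(W_0) \subseteq W_0$ for every $g \in \mathcal{G}$.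
   Context: For a finite set $S=\{v_1,\dots,v_k\}\subset H$, $\mathcal{G}(S)$ denotes the indexed family $\{g v_j : g \in \mathcal{G},\ j=1,\dots,k\}$. A countable indexed family $\{v_n\}_{n\in J}$ is a frame for its closed linear span $V$ if there are constants $0<A\le B$ with $A\|f\|^2 \le \sum_n |\langle f, v_n\rangle|^2 \le B\|f\|^2$ for all $f \in V$. *)

From mathcomp Require Import all_boot all_order all_algebra.
From mathcomp Require Import all_classical all_reals all_analysis.
From mathcomp Require Import complex.
Set Implicit Arguments. Unset Strict Implicit. Unset Printing Implicit Defensive.
Import Order.TTheory GRing.Theory Num.Theory.
Local Open Scope ring_scope.
Local Open Scope classical_set_scope.

Section Hilbert.
Variable R : realType.
Variable H : lmodType R[i].
Variable ip : H -> H -> R[i].      (* inner product, linear in the 1st argument *)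

Definition cnorm2 (z : R[i]) : R := complex.Re z ^+ 2 + complex.Im z ^+ 2.

Definition hnorm (f : H) : R := Num.sqrt (complex.Re (ip f f)).

Definition is_inner_product : Prop :=
  [/\ (forall (a : R[i]) (x y z : H), ip (a *: x + y) z = a * ip x z + ip y z),
      (forall x y : H, ip y x = (ip x y)^*),
      (forall x : H, 0 <= ip x x) &
      (forall x : H, ip x x = 0 -> x = 0)].

Definition is_complete : Prop :=
  forall u : nat -> H,
    (forall e : R, 0 < e -> exists N : nat, forall m n : nat,
        (N <= m)%N -> (N <= n)%N -> hnorm (u m - u n) < e) ->
    exists l : H, forall e : R, 0 < e -> exists N : nat, forall n : nat,
        (N <= n)%N -> hnorm (u n - l) < e.

Definition is_separable : Prop :=
  exists d : nat -> H, forall (f : H) (e : R), 0 < e ->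
    exists n : nat, hnorm (f - d n) < e.

Definition separable_hilbert_space : Prop :=
  [/\ is_inner_product, is_complete & is_separable].

Definition span (S : set H) : set H :=
  [set f | exists (n : nat) (c : 'I_n -> R[i]) (v : 'I_n -> H),
     (forall k, S (v k)) /\ f = \sum_(k < n) c k *: v k].

Definition hclosure (S : set H) : set H :=
  [set f | forall e : R, 0 < e -> exists h, S h /\ hnorm (f - h) < e].

Definition clspan (S : set H) : set H := hclosure (span S).

Definition closed_subspace (W : set H) : Prop :=
  [/\ W 0,
      (forall (a : R[i]) (x y : H), W x -> W y -> W (a *: x + y)) &
      hclosure W `<=` W].

Definition unitary (g : H -> H) : Prop :=
  [/\ linear_for *:%R g,
      (forall x y : H, ip (g x) (g y) = ip x y) &
      (forall y : H, exists x, g x = y)].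

Definition ctbl_inf_abelian_unitary_group (G : set (H -> H)) : Prop :=
  [/\ (forall g, G g -> unitary g),
      [/\ G id,
          (forall g h, G g -> G h -> G (g \o h)) &
          (forall g, G g -> exists h, G h /\ g \o h = id /\ h \o g = id)],
      (forall g h, G g -> G h -> g \o h = h \o g) &
      countable G /\ infinite_set G].

(* the indexed family G(S) = {g v_j : g in G, j < k}, indexed by pairs (g, j) *)
Definition orbit_index (G : set (H -> H)) (k : nat) : set ((H -> H) * 'I_k) :=
  [set p | G p.1].
Definition orbit_family (k : nat) (v : 'I_k -> H) (p : (H -> H) * 'I_k) : H :=
  p.1 (v p.2).

Definition frame_for (J : choiceType) (D : set J) (v : J -> H) (V : set H) : Prop :=
  V = clspan (v @` D) /\
  exists A B : R, [/\ 0 < A, A <= B &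
    forall f, V f ->
      ((A * hnorm f ^+ 2)%:E <= \esum_(j in D) (cnorm2 (ip f (v j)))%:E
       <= (B * hnorm f ^+ 2)%:E)%E].

End Hilbert.

Arguments orbit_index {R H} G k _.

From Pilot Require Import Defs.
From mathcomp Require Import all_boot all_order all_algebra.
From mathcomp Require Import all_classical all_reals all_analysis.
From mathcomp Require Import complex.
From mathcomp Require Import ring lra.
Import Order.TTheory GRing.Theory Num.Theory.
Local Open Scope ring_scope.
Local Open Scope classical_set_scope.
Set Implicit Arguments. Unset Strict Implicit. Unset Printing Implicit Defensive.

(* If G(Gamma) is a frame for W0, then W0 is the closed span of the G-stable
   family G(Gamma), which every unitary g in G maps into itself.  Conversely, if
   W0 is G-invariant, then the orthogonal projection P onto W0 (which exists by
   completeness) commutes with G, because g and g^-1 both preserve W0 and g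
   preserves the inner product.  Let Gamma be the set of distinct vectors among
   P y_1, ..., P y_s.  As P is a linear contraction fixing W0 and W0 <= V1, the
   family G(Gamma) spans a dense subspace of W0.  For f in W0 we have
   <f, g y_j> = <f, g P y_j>, so the frame sum of f over G(Y) lies between its
   frame sum over G(Gamma) and s times that sum: the bounds A, B of G(Y) give
   the bounds A/s, B for G(Gamma). *)

Lemma sqr_le_mul_of_quadratic_ge0 (R : realFieldType) (a b c : R) :
  0 <= a -> 0 <= b -> (forall t, 0 <= a + t ^+ 2 * b + 2 * t * c) ->
  c ^+ 2 <= a * b.
Proof.
move=> a_ge0 b_ge0 quad_ge0.
have [b0|b_neq0] := eqVneq b 0.
  have [->|c_neq0] := eqVneq c 0; first by rewrite b0 expr0n mulr0.
  have := quad_ge0 (- (a + 1) / (2 * c)); rewrite b0 mulr0 addr0.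
  have -> : 2 * (- (a + 1) / (2 * c)) * c = - (a + 1) by field.
  lra.
have b_gt0 : 0 < b by rewrite lt_def b_neq0.
have := quad_ge0 (- c / b).
have -> : a + (- c / b) ^+ 2 * b + 2 * (- c / b) * c = a - c ^+ 2 / b by field.
by rewrite subr_ge0 ler_pdivrMr.
Qed.

Lemma cnorm2_ge0 (R : realType) (c : R[i]) : 0 <= cnorm2 c.
Proof. by rewrite addr_ge0 ?sqr_ge0. Qed.

Section InnerProduct.
Variables (R : realType) (H : lmodType R[i]) (ip : H -> H -> R[i]).
Hypothesis ip_inner : is_inner_product ip.

Lemma ip_conj x y : ip y x = (ip x y)^*.
Proof. by case: ip_inner => _ + _ _; apply. Qed.

Lemma ipDl x y z : ip (x + y) z = ip x z + ip y z.
Proof. by case: ip_inner => + _ _ _ => /(_ 1 x y z); rewrite scale1r mul1r. Qed.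

Lemma ip0l z : ip 0 z = 0.
Proof. by have := ipDl 0 0 z; rewrite addr0 -{1}[ip 0 z]addr0 => /addrI <-. Qed.

Lemma ipZl a x z : ip (a *: x) z = a * ip x z.
Proof. by case: ip_inner => + _ _ _ => /(_ a x 0 z); rewrite addr0 ip0l addr0. Qed.

Lemma ipNl x z : ip (- x) z = - ip x z.
Proof. by rewrite -scaleN1r ipZl mulN1r. Qed.

Lemma ipBl x y z : ip (x - y) z = ip x z - ip y z.
Proof. by rewrite ipDl ipNl. Qed.

Lemma ipDr x y z : ip z (x + y) = ip z x + ip z y.
Proof. by rewrite ip_conj ipDl rmorphD /= -!ip_conj. Qed.

Lemma ipNr x z : ip z (- x) = - ip z x.
Proof. by rewrite ip_conj ipNl rmorphN /= -ip_conj. Qed.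

Lemma ipBr x y z : ip z (x - y) = ip z x - ip z y.
Proof. by rewrite ipDr ipNr. Qed.

Lemma Re_ip_conj x y : complex.Re (ip y x) = complex.Re (ip x y).
Proof. by rewrite ip_conj; case: (ip x y). Qed.

Lemma Re_ipZl (t : R) x y : complex.Re (ip (t%:C%C *: x) y) = t * complex.Re (ip x y).
Proof. by rewrite ipZl; case: (ip x y) => a b /=; rewrite mul0r subr0. Qed.

Definition sqhnorm x := complex.Re (ip x x).

Lemma ip_diagE x : ip x x = (sqhnorm x)%:C%C.
Proof.
rewrite /sqhnorm; case: ip_inner => _ _ /(_ x) + _.
by case: (ip x x) => a b; rewrite lecE /= => /andP[/eqP -> _].
Qed.

Lemma sqhnorm_ge0 x : 0 <= sqhnorm x.
Proof. by case: ip_inner => _ _ + _ => /(_ x); rewrite ip_diagE lecE /= => /andP[]. Qed.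

Lemma sqhnorm_eq0 x : sqhnorm x = 0 -> x = 0.
Proof. by case: ip_inner => _ _ _ + sq0; apply; rewrite ip_diagE sq0. Qed.

Lemma hnorm_ge0 x : 0 <= hnorm ip x.
Proof. exact: sqrtr_ge0. Qed.

Lemma sqr_hnorm x : hnorm ip x ^+ 2 = sqhnorm x.
Proof. by rewrite sqr_sqrtr // sqhnorm_ge0. Qed.

Lemma le_hnorm x y : (hnorm ip x <= hnorm ip y) = (sqhnorm x <= sqhnorm y).
Proof. by rewrite -!sqr_hnorm ler_pXn2r // nnegrE hnorm_ge0. Qed.

Lemma sqhnormD x y : sqhnorm (x + y) = sqhnorm x + sqhnorm y + 2 * complex.Re (ip y x).
Proof. rewrite /sqhnorm ipDl !ipDr !raddfD /= (Re_ip_conj y x); lra. Qed.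

Lemma sqhnormZ (t : R) x : sqhnorm (t%:C%C *: x) = t ^+ 2 * sqhnorm x.
Proof.
rewrite /sqhnorm Re_ipZl ip_conj ipZl ip_diagE.
by rewrite /= mulr0 subr0 mulrA.
Qed.

Lemma sqhnormN x : sqhnorm (- x) = sqhnorm x.
Proof. by rewrite /sqhnorm ipNl ipNr opprK. Qed.

Lemma sqhnorm_parallelogram x y :
  sqhnorm (x + y) + sqhnorm (x - y) = 2 * sqhnorm x + 2 * sqhnorm y.
Proof. rewrite !sqhnormD sqhnormN ipNl raddfN /=; lra. Qed.

Lemma hnorm_distC x y : hnorm ip (x - y) = hnorm ip (y - x).
Proof. by rewrite /hnorm -/(sqhnorm _) -sqhnormN opprB. Qed.

Lemma cauchy_schwarz_Re x y : complex.Re (ip x y) ^+ 2 <= sqhnorm x * sqhnorm y.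
Proof.
apply: sqr_le_mul_of_quadratic_ge0; rewrite ?sqhnorm_ge0 // => t.
by have := sqhnorm_ge0 (x + t%:C%C *: y); rewrite sqhnormD sqhnormZ Re_ipZl Re_ip_conj mulrA.
Qed.

Lemma Re_ip_le x y : complex.Re (ip x y) <= hnorm ip x * hnorm ip y.
Proof.
have hxy_ge0 := mulr_ge0 (hnorm_ge0 x) (hnorm_ge0 y).
have : complex.Re (ip x y) ^+ 2 <= (hnorm ip x * hnorm ip y) ^+ 2.
  by rewrite exprMn !sqr_hnorm cauchy_schwarz_Re.
move: hxy_ge0; set c := complex.Re _; set m := _ * _; nra.
Qed.

Lemma ler_hnormD x y : hnorm ip (x + y) <= hnorm ip x + hnorm ip y.
Proof.
rewrite -(ler_pXn2r (_ : 0 < 2)%N) ?nnegrE ?addr_ge0 ?hnorm_ge0 //.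
rewrite sqr_hnorm sqhnormD -!sqr_hnorm.
have := Re_ip_le y x; lra.
Qed.

End InnerProduct.

Section Spans.
Variables (R : realType) (H : lmodType R[i]) (ip : H -> H -> R[i]).

Lemma hclosure_mono (A B : set H) : A `<=` B -> hclosure ip A `<=` hclosure ip B.
Proof. by move=> AB f clAf e /clAf[h [Ah fh]]; exists h; split => //; apply: AB. Qed.

Lemma span_mono (A B : set H) : A `<=` B -> Defs.span A `<=` Defs.span B.
Proof. by move=> AB _ [n [c [v [Av ->]]]]; exists n, c, v; split => // k; apply: AB. Qed.

Lemma clspan_mono (A B : set H) : A `<=` B -> clspan ip A `<=` clspan ip B.
Proof. by move=> AB; apply/hclosure_mono/span_mono. Qed.

Variable W : set H.
Hypothesis W_sub : closed_subspace ip W.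

Lemma subspace0 : W 0.
Proof. by case: W_sub. Qed.

Lemma subspaceZD a x y : W x -> W y -> W (a *: x + y).
Proof. by case: W_sub => _ + _; apply. Qed.

Lemma subspaceZ a x : W x -> W (a *: x).
Proof. by move=> Wx; rewrite -[_ *: _]addr0; apply: subspaceZD => //; apply: subspace0. Qed.

Lemma subspaceD x y : W x -> W y -> W (x + y).
Proof. by move=> Wx Wy; rewrite -[x]scale1r; apply: subspaceZD. Qed.

Lemma subspaceB x y : W x -> W y -> W (x - y).
Proof. by move=> Wx Wy; rewrite addrC -scaleN1r; apply: subspaceZD. Qed.

Lemma subspace_closure : hclosure ip W `<=` W.
Proof. by case: W_sub. Qed.

Lemma clspan_sub (S : set H) : S `<=` W -> clspan ip S `<=` W.
Proof.
move=> SW f /(hclosure_mono _) f_cl; apply/subspace_closure/f_cl.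
move=> _ [n [c [v [Sv ->]]]]; apply: big_ind => //.
- exact: subspace0.
- exact: subspaceD.
- by move=> k _; apply/subspaceZ/SW.
Qed.

End Spans.

Section LinearMaps.
Variables (R : realType) (H : lmodType R[i]) (f : H -> H).
Hypothesis f_lin : linear_for *:%R f.

Lemma linear_for0 : f 0 = 0.
Proof. by have := f_lin 1 0 0; rewrite !scale1r addr0 -{1}[f 0]addr0 => /addrI <-. Qed.

Lemma linear_forD x y : f (x + y) = f x + f y.
Proof. by have := f_lin 1 x y; rewrite !scale1r. Qed.

Lemma linear_forZ a x : f (a *: x) = a *: f x.
Proof. by have := f_lin a x 0; rewrite !addr0 linear_for0 addr0. Qed.

Lemma linear_forB x y : f (x - y) = f x - f y.
Proof. by rewrite addrC -scaleN1r f_lin scaleN1r addrC. Qed.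

Lemma linear_for_span (S : set H) : f @` Defs.span S `<=` Defs.span (f @` S).
Proof.
move=> _ [_ [n [c [v [Sv ->]]]] <-]; exists n, c, (f \o v); split.
  by move=> k; exists (v k).
by rewrite (big_morph f linear_forD linear_for0); apply: eq_bigr => k _; rewrite linear_forZ.
Qed.

Variable ip : H -> H -> R[i].
Hypothesis f_contr : forall u, hnorm ip (f u) <= hnorm ip u.

Lemma linear_for_clspan (S : set H) : f @` clspan ip S `<=` clspan ip (f @` S).
Proof.
move=> _ [u u_cl <-] e /u_cl[h [Sh uh]]; exists (f h); split.
  by apply: linear_for_span; exists h.
by rewrite -linear_forB; apply: le_lt_trans (f_contr _) uh.
Qed.

End LinearMaps.

Lemma exists_natSinv_lt (R : archiRealFieldType) (e : R) : 0 < e ->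
  exists N, forall n, (N <= n)%N -> n.+1%:R^-1 < e.
Proof.
by move=> e_gt0; have [N _ ltN] := near_infty_natSinv_lt (PosNum e_gt0); exists N => n /ltN.
Qed.

Section Projection.
Variables (R : realType) (H : lmodType R[i]) (ip : H -> H -> R[i]).
Hypothesis ip_inner : is_inner_product ip.
Variable W : set H.
Hypothesis W_sub : closed_subspace ip W.
Variable u : H.

Lemma minimizer_orthogonal l : W l ->
  (forall w, W w -> hnorm ip (u - l) <= hnorm ip (u - w)) ->
  forall w, W w -> ip (u - l) w = 0.
Proof.
move=> Wl l_min.
have Re_eq0 w : W w -> complex.Re (ip w (u - l)) = 0.
  move=> Ww; apply/eqP; rewrite -sqrf_eq0 eq_le sqr_ge0 andbT -(mul0r (sqhnorm ip w)).
  apply: sqr_le_mul_of_quadratic_ge0; rewrite ?lexx ?sqhnorm_ge0 // => t.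
  have := l_min _ (subspaceZD W_sub (- t%:C%C) Ww Wl).
  rewrite le_hnorm // opprD scaleNr opprK addrCA addrC.
  rewrite (sqhnormD ip_inner (u - l)) sqhnormZ // Re_ipZl //.
  lra.
move=> w Ww; rewrite ip_conj //.
have := Re_eq0 _ (subspaceZ W_sub 'i%C Ww); rewrite ipZl //.
have := Re_eq0 _ Ww; case: (ip w (u - l)) => a b /= ->.
by move/eqP; rewrite mul0r mul1r sub0r oppr_eq0 => /eqP ->; rewrite rmorph0.
Qed.

Lemma sqhnorm_sub_le_dist (d : R) a b : 0 <= d ->
  (forall w, W w -> d <= hnorm ip (u - w)) -> W a -> W b ->
  sqhnorm ip (a - b) <= 2 * sqhnorm ip (u - a) + 2 * sqhnorm ip (u - b) - 4 * d ^+ 2.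
Proof.
move=> d_ge0 d_le Wa Wb.
pose m := (2 : R)^-1%:C%C *: (a + b).
have Wm : W m by apply: (subspaceZ W_sub); apply: (subspaceD W_sub).
have mid : (u - a) + (u - b) = 2%:C%C *: (u - m).
  rewrite /m scalerBr scalerA -rmorphM /= mulfV ?pnatr_eq0 // scale1r.
  by rewrite rmorph_nat scaler_nat mulr2n opprD addrACA.
have := sqhnorm_parallelogram ip_inner (u - a) (u - b).
have diff : (u - a) - (u - b) = - (a - b) by rewrite opprB addrC addrA subrK opprB.
rewrite mid diff sqhnormZ // sqhnormN //.
have : d ^+ 2 <= sqhnorm ip (u - m).
  by rewrite -sqr_hnorm // ler_pXn2r ?nnegrE ?hnorm_ge0 ?d_le.
lra.
Qed.

Lemma minimizing_seq_cauchy (d : R) (ws : nat -> H) : 0 <= d ->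
  (forall w, W w -> d <= hnorm ip (u - w)) -> (forall n, W (ws n)) ->
  (forall n, hnorm ip (u - ws n) < d + n.+1%:R^-1) ->
  forall e, 0 < e -> exists N, forall m n, (N <= m)%N -> (N <= n)%N ->
    hnorm ip (ws m - ws n) < e.
Proof.
move=> d_ge0 d_le Wws ws_lt e e_gt0.
have c_gt0 : 0 < 8 * d + 4 by lra.
have [N ltN] := exists_natSinv_lt (divr_gt0 (exprn_gt0 2 e_gt0) c_gt0).
exists N => m n Nm Nn.
have sq_le k : sqhnorm ip (u - ws k) <= d ^+ 2 + (2 * d + 1) * k.+1%:R^-1.
  have /andP[a_gt0 a_le1] : 0 < (k.+1%:R^-1 : R) <= 1.
    by rewrite invr_gt0 ltr0Sn invf_le1 ?ler1n.
  have := ltW (ws_lt k).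
  rewrite -(ler_pXn2r (_ : 0 < 2)%N) ?nnegrE ?hnorm_ge0 ?addr_ge0 ?(ltW a_gt0) // sqr_hnorm //.
  move: (k.+1%:R^-1) a_gt0 a_le1 => a; nra.
rewrite -(ltr_pXn2r (_ : 0 < 2)%N) ?nnegrE ?hnorm_ge0 ?ltW // sqr_hnorm //.
(* the parallelogram estimate bounds the square by (4d + 2)(1/(m+1) + 1/(n+1)) *)
have := sqhnorm_sub_le_dist d_ge0 d_le (Wws m) (Wws n).
have := sq_le m; have := sq_le n.
have := ltN _ Nm; have := ltN _ Nn; rewrite !ltr_pdivlMr //.
move: (m.+1%:R^-1) (n.+1%:R^-1) => a b; lra.
Qed.

Hypothesis ip_complete : is_complete ip.

Lemma dist_attained : exists2 l, W l & forall w, W w -> hnorm ip (u - l) <= hnorm ip (u - w).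
Proof.
pose S := [set hnorm ip (u - w) | w in W].
have S_lb : has_lbound S by exists 0 => _ [w _ <-]; apply: hnorm_ge0.
have S_neq0 : S !=set0 by exists (hnorm ip (u - 0)), 0 => //; apply: (subspace0 W_sub).
have d_ge0 : 0 <= inf S by apply: lb_le_inf => // _ [w _ <-]; apply: hnorm_ge0.
have d_le w : W w -> inf S <= hnorm ip (u - w) by move=> Ww; apply: ge_inf => //; exists w.
have /choice[ws ws_min] : forall n, exists w, W w /\ hnorm ip (u - w) < inf S + n.+1%:R^-1.
  move=> n; have inv_gt0 : 0 < (n.+1%:R^-1 : R) by rewrite invr_gt0.
  by have [_ [w Ww <-] lt_w] := inf_adherent inv_gt0 (conj S_neq0 S_lb); exists w.
have [l ws_to_l] := ip_complete (minimizing_seq_cauchy d_ge0 d_le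
  (fun n => (ws_min n).1) (fun n => (ws_min n).2)).
exists l => [|w Ww]; last apply: le_trans (d_le _ Ww).
  apply: (subspace_closure W_sub) => e /ws_to_l[N N_le]; exists (ws N).
  by split; [exact: (ws_min N).1 | rewrite hnorm_distC //; apply: N_le].
apply/ler_addgt0Pr => e e_gt0.
have e2_gt0 : 0 < e / 2 by rewrite divr_gt0.
have [N1 N1_le] := ws_to_l _ e2_gt0.
have [N2 N2_le] := exists_natSinv_lt e2_gt0.
pose n := maxn N1 N2.
have := ler_hnormD ip_inner (u - ws n) (ws n - l); rewrite addrA subrK.
have := N1_le n (leq_maxl _ _); have := N2_le n (leq_maxr _ _); have := (ws_min n).2.
set a := n.+1%:R^-1; lra.
Qed.
End Projection.

Section OrthogonalProjection.
Variables (R : realType) (H : lmodType R[i]) (ip : H -> H -> R[i]).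
Hypothesis ip_inner : is_inner_product ip.
Variable W : set H.
Hypothesis W_sub : closed_subspace ip W.

Lemma orthogonal_projection_exists : is_complete ip ->
  exists P : H -> H, (forall u, W (P u)) /\ (forall u w, W w -> ip (u - P u) w = 0).
Proof.
move=> ip_complete.
have /choice[P P_spec] : forall u, exists l, W l /\ forall w, W w -> ip (u - l) w = 0.
  move=> u; have [l Wl l_min] := dist_attained ip_inner W_sub u ip_complete.
  by exists l; split => //; apply: minimizer_orthogonal.
by exists P; split => u; case: (P_spec u).
Qed.

Variable P : H -> H.
Hypothesis P_in : forall u, W (P u).
Hypothesis P_orth : forall u w, W w -> ip (u - P u) w = 0.

Lemma orth_proj_unique u l : W l -> (forall w, W w -> ip (u - l) w = 0) -> P u = l.
Proof.
move=> Wl l_orth; apply/eqP; rewrite -subr_eq0; apply/eqP/(sqhnorm_eq0 ip_inner).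
have W_diff : W (P u - l) by apply: (subspaceB W_sub).
have diffE : P u - l = (u - l) - (u - P u) by rewrite opprB [RHS]addrC addrA subrK.
by rewrite /sqhnorm {1}diffE ipBl // l_orth // P_orth // subrr.
Qed.

Lemma orth_proj_id w : W w -> P w = w.
Proof. by move=> Ww; apply: orth_proj_unique => // x _; rewrite subrr ip0l. Qed.

Lemma orth_proj_linear : linear_for *:%R P.
Proof.
move=> a x y; apply: orth_proj_unique => [|w Ww].
  by apply: (subspaceZD W_sub).
have -> : a *: x + y - (a *: P x + P y) = a *: (x - P x) + (y - P y).
  by rewrite scalerBr opprD addrACA.
by rewrite ipDl // ipZl // !P_orth // mulr0 addr0.
Qed.

Lemma hnorm_orth_proj_le u : hnorm ip (P u) <= hnorm ip u.
Proof.
have uE : u = P u + (u - P u) by rewrite addrC subrK.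
rewrite le_hnorm // {2}uE sqhnormD // P_orth // raddf0 mulr0 addr0.
by rewrite lerDl sqhnorm_ge0.
Qed.

Lemma ip_orth_proj_r f v : W f -> ip f (P v) = ip f v.
Proof.
move=> Wf; apply/eqP; rewrite -subr_eq0 -ipBr //.
by rewrite ip_conj // -opprB ipNl // P_orth // oppr0 rmorph0.
Qed.

Lemma orth_proj_comm (g h : H -> H) : linear_for *:%R g ->
  (forall x y, ip (g x) (g y) = ip x y) ->
  (forall w, W w -> W (g w)) -> (forall w, W w -> W (h w)) -> g \o h = id ->
  forall u, P (g u) = g (P u).
Proof.
move=> g_lin g_ip g_inv h_inv gh u; apply: orth_proj_unique => [|w Ww].
  exact/g_inv/P_in.
by rewrite -(linear_forB g_lin) -[w](congr1 (@^~ w) gh) g_ip P_orth //; apply: h_inv.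
Qed.

End OrthogonalProjection.

Lemma exists_injective_range (T : eqType) n (f : 'I_n -> T) :
  exists p (z : 'I_p -> T), injective z /\ range z = range f.
Proof.
pose t := in_tuple (undup [seq f j | j <- enum 'I_n]).
exists (size t), (tnth t); split; first exact/tuple_uniqP/undup_uniq.
apply/seteqP; split => _ [k _ <-].
  have /mapP[j _ ->] : tnth t k \in [seq f j | j <- enum 'I_n].
    by rewrite -mem_undup mem_tnth.
  by exists j.
have /tnthP[j ->] : f k \in t by rewrite mem_undup; apply: map_f; rewrite mem_enum.
by exists j.
Qed.

Section SumsOverRanges.
Variables (R : numDomainType) (T : Type) (a : T -> R).
Hypothesis a_ge0 : forall x, 0 <= a x.
Variables (n p : nat) (f : 'I_n -> T) (z : 'I_p -> T).

Lemma ler_sum_injective_range : injective z -> range z `<=` range f ->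
  \sum_(k < p) a (z k) <= \sum_(j < n) a (f j).
Proof.
move=> z_inj z_sub.
have /choice[j_of j_ofE] : forall k, exists j, f j = z k.
  by move=> k; have [j _ fj] := z_sub _ (imageT z k); exists j.
have j_of_inj : injective j_of.
  by move=> k1 k2 eq_j; apply: z_inj; rewrite -!j_ofE eq_j.
rewrite (bigID (mem [set j_of k | k in 'I_p]%SET)) /= -[X in X <= _]addr0 lerD ?sumr_ge0 //.
rewrite big_imset /=; last by move=> ? ? _ _; apply: j_of_inj.
by apply: ler_sum => k _; rewrite j_ofE.
Qed.

Lemma ler_sum_range_muln : range f `<=` range z ->
  \sum_(j < n) a (f j) <= (\sum_(k < p) a (z k)) *+ n.
Proof.
move=> f_sub; rewrite -[n in _ *+ n]card_ord -sumr_const; apply: ler_sum => j _.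
have [k _ <-] := f_sub _ (imageT f j).
by rewrite (bigD1 k) //= lerDl sumr_ge0.
Qed.
End SumsOverRanges.

Lemma esum_orbit_family (R : realType) (H : lmodType R[i]) (G : set (H -> H))
    n (v : 'I_n -> H) (F : H -> R) : (forall x, 0 <= F x) ->
  \esum_(i in orbit_index G n) (F (orbit_family v i))%:E =
  \esum_(g in G) (\sum_(k < n) F (g (v k)))%:E.
Proof.
move=> F_ge0.
have -> : orbit_index G n = G `*`` (fun=> [set: 'I_n]).
  by apply/seteqP; split => -[g k] //=; case.
rewrite -(esum_esum (a := fun g k => (F (g (v k)))%:E)) => [|g k _ _]; last first.
  by rewrite lee_fin.
apply: eq_esum => g _.
rewrite esum_fset; [|exact: finite_finset|by move=> k _; rewrite lee_fin].
have -> : [set: 'I_n] = [set` enum 'I_n] by apply/seteqP; split => k //= _; rewrite mem_enum.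
by rewrite -fsbig_seq ?enum_uniq // big_enum sumEFin.
Qed.

Lemma esum_frame_bounds (R : realType) (I : choiceType) (D : set I) (a b : I -> R)
    (n : nat) (A B : R) : (0 < n)%N ->
  (forall i, D i -> 0 <= a i) -> (forall i, D i -> a i <= b i <= a i *+ n) ->
  (A%:E <= \esum_(i in D) (b i)%:E <= B%:E)%E ->
  ((A / n%:R)%:E <= \esum_(i in D) (a i)%:E <= B%:E)%E.
Proof.
move=> n_gt0 a_ge0 ab /andP[A_le le_B].
have le_ab : (\esum_(i in D) (a i)%:E <= \esum_(i in D) (b i)%:E)%E.
  by apply: le_esum => i Di; rewrite lee_fin; case/andP: (ab i Di).
have le_ba : (\esum_(i in D) (b i)%:E <= (\esum_(i in D) (a i)%:E) *+ n)%E.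
  have -> : ((\esum_(i in D) (a i)%:E) *+ n = \sum_(j < n) \esum_(i in D) (a i)%:E)%E.
    by rewrite sumr_const card_ord.
  rewrite -esum_sum => [|i j Di _]; last by rewrite lee_fin a_ge0.
  apply: le_esum => i Di; rewrite sumEFin lee_fin sumr_const card_ord.
  by case/andP: (ab i Di).
have := le_trans A_le le_ba; have := le_trans le_ab le_B.
have : (0 <= \esum_(i in D) (a i)%:E)%E by apply: esum_ge0 => i Di; rewrite lee_fin a_ge0.
case: (\esum_(i in D) _) => [x| |] //= _ -> .
by rewrite andbT -EFin_natmul !lee_fin ler_pdivrMr ?ltr0n // mulr_natr.
Qed.

Lemma unitary_hnorm (R : realType) (H : lmodType R[i]) (ip : H -> H -> R[i]) g :
  unitary ip g -> forall u, hnorm ip (g u) = hnorm ip u.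
Proof. by case=> _ g_ip _ u; rewrite /hnorm g_ip. Qed.

Section UnitaryGroup.
Variables (R : realType) (H : lmodType R[i]) (ip : H -> H -> R[i]).
Hypothesis ip_inner : is_inner_product ip.
Variable G : set (H -> H).
Hypothesis G_unitary : forall g, G g -> unitary ip g.
Hypothesis G_comp : forall g h, G g -> G h -> G (g \o h).

Local Notation orbit_set v := (orbit_family v @` orbit_index G _).

Lemma orbit_set_comp n (v : 'I_n -> H) g : G g -> g @` orbit_set v `<=` orbit_set v.
Proof. by move=> Gg _ [_ [[h k] Gh <-] <-]; exists (g \o h, k) => //; apply: G_comp. Qed.

Lemma clspan_orbit_invariant n (v : 'I_n -> H) g w : G g ->
  clspan ip (orbit_set v) w -> clspan ip (orbit_set v) (g w).
Proof.
move=> Gg w_in; have [g_lin _ _] := G_unitary Gg.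
have g_contr u : hnorm ip (g u) <= hnorm ip u by rewrite (unitary_hnorm (G_unitary Gg)) lexx.
have gw_in : (g @` clspan ip (orbit_set v)) (g w) by exists w.
exact: (clspan_mono (@orbit_set_comp n v g Gg) (linear_for_clspan g_lin g_contr gw_in)).
Qed.

Hypothesis G_inv : forall g, G g -> exists h, G h /\ g \o h = id /\ h \o g = id.
Variable W : set H.
Hypothesis W_sub : closed_subspace ip W.
Hypothesis W_inv : forall g, G g -> forall w, W w -> W (g w).
Variable P : H -> H.
Hypothesis P_in : forall u, W (P u).
Hypothesis P_orth : forall u w, W w -> ip (u - P u) w = 0.

Lemma orth_proj_comm_group g : G g -> forall u, P (g u) = g (P u).
Proof.
move=> Gg; have [h [Gh [gh _]]] := G_inv Gg; have [g_lin g_ip _] := G_unitary Gg.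
by apply: (orth_proj_comm ip_inner W_sub P_in P_orth g_lin g_ip (W_inv Gg) (W_inv Gh) gh).
Qed.

Variables (s p : nat) (y : 'I_s -> H) (z : 'I_p -> H).
Hypothesis z_range : range z = range (P \o y).

Lemma orth_proj_orbit_set : P @` orbit_set y `<=` orbit_set z.
Proof.
move=> _ [_ [[g j] Gg <-] <-] /=.
have [k _ zk] : range z (P (y j)) by rewrite z_range; exists j.
by exists (g, k) => //=; rewrite zk orth_proj_comm_group.
Qed.

Lemma clspan_orth_proj_orbit : W `<=` clspan ip (orbit_set y) -> W = clspan ip (orbit_set z).
Proof.
move=> W_le; apply/seteqP; split => [w Ww|].
  have Pw_in : (P @` clspan ip (orbit_set y)) (P w) by exists w => //; apply: W_le.
  rewrite -(orth_proj_id ip_inner W_sub P_in P_orth Ww).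
  have P_lin := orth_proj_linear ip_inner W_sub P_in P_orth.
  have P_contr := hnorm_orth_proj_le ip_inner P_in P_orth.
  exact: (clspan_mono (@orth_proj_orbit_set) (linear_for_clspan P_lin P_contr Pw_in)).
apply: (clspan_sub W_sub) => _ [[g k] Gg <-]; apply: W_inv => //=.
have [j _ <-] : range (P \o y) (z k) by rewrite -z_range; exists k.
exact: P_in.
Qed.

Lemma frame_orth_proj_orbit (V : set H) : (0 < s)%N -> injective z -> W `<=` V ->
  frame_for ip (orbit_index G s) (orbit_family y) V ->
  frame_for ip (orbit_index G p) (orbit_family z) W.
Proof.
move=> s_gt0 z_inj W_le [VE [A [B [A_gt0 le_AB V_bounds]]]].
split; first by apply: clspan_orth_proj_orbit; rewrite -VE.
exists (A / s%:R), B; split.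
- by rewrite divr_gt0 ?ltr0n.
- by apply: le_trans le_AB; rewrite ler_pdivrMr ?ltr0n // ler_peMr ?ler1n // ltW.
move=> f Wf; have := V_bounds f (W_le _ Wf).
rewrite !(esum_orbit_family _ _ (fun v => cnorm2_ge0 (ip f v))).
rewrite mulrAC; apply: esum_frame_bounds => // g Gg.
  by apply: sumr_ge0 => k _; apply: cnorm2_ge0.
pose a v := cnorm2 (ip f (g v)); have a_ge0 v : 0 <= a v by apply: cnorm2_ge0.
have -> : \sum_(j < s) cnorm2 (ip f (g (y j))) = \sum_(j < s) a ((P \o y) j).
  apply: eq_bigr => j _; rewrite /a /= -orth_proj_comm_group //.
  by rewrite (ip_orth_proj_r ip_inner P_orth).
rewrite (ler_sum_injective_range a_ge0 z_inj) ?z_range //=.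
by rewrite (ler_sum_range_muln a_ge0) ?z_range.
Qed.

End UnitaryGroup.

Theorem theorem3p3 (R : realType) (H : lmodType R[i]) (ip : H -> H -> R[i])
  (hH : separable_hilbert_space ip)
  (G : set (H -> H)) (hG : ctbl_inf_abelian_unitary_group ip G)
  (r s : nat) (x : 'I_r -> H) (y : 'I_s -> H)
  (hx : injective x) (hy : injective y) (hrs : (r < s)%N)
  (V0 V1 W0 : set H)
  (hV0 : V0 = clspan ip (orbit_family x @` orbit_index G r))
  (hV1 : V1 = clspan ip (orbit_family y @` orbit_index G s))
  (hV01 : V0 `<=` V1)
  (hW0 : closed_subspace ip W0) (hW01 : W0 `<=` V1)
  (hsum : [set v + w | v in V0 & w in W0] = V1)
  (hcap : V0 `&` W0 = [set 0])
  (hfX : frame_for ip (orbit_index G r) (orbit_family x) V0)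
  (hfY : frame_for ip (orbit_index G s) (orbit_family y) V1) :
  (exists (p : nat) (z : 'I_p -> H),
      [/\ (0 < p)%N, injective z, (forall k, W0 (z k)) &
          frame_for ip (orbit_index G p) (orbit_family z) W0])
  <-> (forall g, G g -> forall w, W0 w -> W0 (g w)).
Proof.
case: hH => ip_inner ip_complete _.
case: hG => G_unitary [_ G_comp G_inv] _ _.
split=> [[p [z [_ _ _ [W0E _]]]] g Gg w|W0_inv].
  by rewrite W0E; apply: clspan_orbit_invariant.
have [P [P_in P_orth]] := orthogonal_projection_exists ip_inner hW0 ip_complete.
have [p [z [z_inj z_range]]] := exists_injective_range (P \o y).
have s_gt0 : (0 < s)%N := leq_ltn_trans (leq0n r) hrs.
have z_in k : W0 (z k).
  have [j _ <-] : range (P \o y) (z k) by rewrite -z_range; exists k.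
  exact: P_in.
exists p, z; split => //.
  have [k _ _] : range z (P (y (Ordinal s_gt0))) by rewrite z_range; exists (Ordinal s_gt0).
  exact: leq_ltn_trans (leq0n k) (ltn_ord k).
exact: (frame_orth_proj_orbit ip_inner G_unitary G_inv hW0 W0_inv P_in P_orth z_range
  s_gt0 z_inj hW01 hfY).
Qed.
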